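(* Let $\gamma\ge0$ and $\alpha_i,\beta_i\ge0$ with $\gamma+\sum_i\alpha_i+\sum_i\beta_i=1$. The separation distance between the distribution of $k$ successive (independent) applications of an $(\vec{\alpha},\vec{\beta},\gamma)$ shuffle to an $n$-card deck and the uniform distribution on $S_n$ is at most \[ \binom{n}{2}\Big[\sum_i \alpha_i^2+\sum_i\beta_i^2\Big]^k .\]
   Context: An $(\vec{\alpha},\vec{\beta},\gamma)$ shuffle of $n$ cards is the random permutation $\pi$ of $\{1,\dots,n\}$ produced as follows. Choose a word of length $n$ of integers with independent letters, letter $i>0$ with probability $\alpha_i$, letter $-i$ ($i>0$) with probability $\beta_i$, letter $0$ with probability $\gamma$. Process the occurring letter values in increasing order of the integers, assigning consecutive blocks of $\{1,\dots,n\}$ starting from $1$: a negative value's block is written at its positions in decreasing order from left to right; the block of $0$ is written at its positions in uniformly random order; a positive value's block is written at its positions in increasing order from left to right. $\pi(p)$ is the integer at position $p$. The separation distance between a probability $P$ on $S_n$ and the uniform distribution $U$ is $\max_{\pi\in S_n}\big(1-\frac{P(\pi)}{U(\pi)}\big)$. *)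

From HB Require Import structures.
From mathcomp Require Import all_boot all_order all_algebra all_fingroup.
From mathcomp Require Import all_classical all_reals.
From mathcomp Require Import topology normedtype sequences esum.
Set Implicit Arguments. Unset Strict Implicit. Unset Printing Implicit Defensive.
Import Order.TTheory GRing.Theory Num.Theory.
Local Open Scope ring_scope.

Section Shuffle.
Variable R : realType.
Variable n : nat.

(* probability of letter z : letter 0 has prob g, letter i>0 has prob a (i-1),
   letter -i (i>0) has prob b (i-1), i.e. a i = alpha_{i+1}, b i = beta_{i+1}. *)
Definition letterp (g : R) (a b : nat -> R) (z : int) : R :=
  match z with
  | Posz 0 => g
  | Posz (S i) => a i
  | Negz i => b i
  end.

Definition word_weight (g : R) (a b : nat -> R) (w : {ffun 'I_n -> int}) : R :=
  \prod_(j : 'I_n) letterp g a b (w j).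

(* the (0-based) value written at position p, given the word w and a
   permutation t used to fix the (uniformly random) order in which the
   block of letter 0 is written: the zero positions receive the block in the
   order of their t-values. *)
Definition shuffle_value (w : {ffun 'I_n -> int}) (t : 'S_n) (p : 'I_n) : nat :=
  #|[set q : 'I_n | w q < w p]| +
  (if 0 < w p then #|[set q : 'I_n | (w q == w p) && (q < p)%N]|
   else if w p < 0 then #|[set q : 'I_n | (w q == w p) && (p < q)%N]|
   else #|[set q : 'I_n | (w q == 0) && (t q < t p)%N]|).

(* conditional probability that the shuffle outputs s given the word w
   (t uniform on S_n induces the uniform random order of the 0 block) *)
Definition shuffle_cond (w : {ffun 'I_n -> int}) (s : 'S_n) : R :=
  #|[set t : 'S_n | [forall p, nat_of_ord (s p) == shuffle_value w t p]]|%:R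
    / (n`!)%:R.

Definition shuffle1 (g : R) (a b : nat -> R) (s : 'S_n) : R :=
  fine (\esum_(w in [set: {ffun 'I_n -> int}])
          (word_weight g a b w * shuffle_cond w s)%:E).

Fixpoint shufflek (g : R) (a b : nat -> R) (k : nat) (s : 'S_n) : R :=
  match k with
  | 0 => (s == 1%g)%:R
  | k'.+1 => \sum_(t : 'S_n) shuffle1 g a b t * shufflek g a b k' (t^-1 * s)%g
  end.

Definition unif (s : 'S_n) : R := ((n`!)%:R)^-1.

Definition sep_dist (P : 'S_n -> R) : R :=
  \big[Num.max/(1 - P 1%g / unif 1%g)]_(s : 'S_n) (1 - P s / unif s).

End Shuffle.

From mathcomp Require Import all_boot all_order all_algebra all_fingroup.
From mathcomp Require Import all_classical all_reals.
From mathcomp Require Import topology normedtype sequences esum ereal realfun.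
From mathcomp Require Import lra.
Import Order.TTheory GRing.Theory Num.Theory numFieldNormedType.Exports.
Set Implicit Arguments. Unset Strict Implicit. Unset Printing Implicit Defensive.
Local Open Scope ring_scope.

(** One shuffle acts on the relative order of the cards: they are sorted by
letter, and inside the block of a letter their previous order is kept (positive
letter), reversed (negative letter) or replaced by a uniformly random one
(letter 0). Call two cards separated once they have fallen into different
blocks, or together into the block of 0. Whether every pair is separated after
[k] shuffles does not depend on the starting order, and on that event the final
order does not depend on the starting order either; by relabelling the deck it
is therefore uniform there. Hence [n! P^k(s) >= P(all pairs separated)], and a
union bound over the [C(n,2)] pairs, each staying unseparated during one shuffle
with probability [sum alpha_i^2 + sum beta_i^2], gives the claim. Since the
alphabet is infinite, the argument is run on the finitely many letters [0, +-1,
..., +-N], whose weights sum to at most 1, and [N] is then sent to infinity. *)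

(** * Strict total orders and rankings *)

Definition strict_total (T : eqType) (B : rel T) :=
  [/\ irreflexive B, transitive B & forall x y, x != y -> B x y || B y x].

Lemma strict_total_rev (T : eqType) (B : rel T) :
  strict_total B -> strict_total (fun x y => B y x).
Proof.
case=> irrB trB totB; split=> // [y x z Bxy Byz|x y /totB]; first exact: trB Byz Bxy.
by rewrite orbC.
Qed.

Lemma strict_total_relpre (T U : eqType) (h : U -> T) (B : rel T) :
  injective h -> strict_total B -> strict_total (relpre h B).
Proof.
move=> injh [irrB trB totB]; split=> [x|y x z|x y] /=; first exact: irrB.
  exact: trB.
by rewrite -(inj_eq injh); exact: totB.
Qed.

Lemma strict_total_lex (T : eqType) d (V : orderType d) (K : T -> V) (C : V -> rel T) :
  (forall v, strict_total (C v)) ->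
  strict_total (fun x y => (K x < K y)%O || (K x == K y) && C (K y) x y).
Proof.
move=> totC; split=> [x|y x z|x y xy].
- by rewrite ltxx eqxx /=; case: (totC (K x)).
- case/orP=> [ltxy|/andP[/eqP eqxy Cxy]] /orP[ltyz|/andP[/eqP eqyz Cyz]].
  + by rewrite (lt_trans ltxy ltyz).
  + by rewrite -eqyz ltxy.
  + by rewrite eqxy ltyz.
  + rewrite eqxy eqyz ltxx eqxx /=; case: (totC (K z)) => _ trC _.
    by apply: trC Cyz; rewrite -eqyz.
- case: (ltgtP (K x) (K y)) => //= eqxy; rewrite eqxy.
  by case: (totC (K y)) => _ _ /(_ x y xy).
Qed.

Lemma strict_total_ltn : strict_total ltn.
Proof. by split=> [x|y x z|x y]; [exact: ltnn|exact: ltn_trans|rewrite -neq_ltn]. Qed.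

Definition pos_lt {n} : rel 'I_n := relpre (@nat_of_ord n) ltn.

Lemma strict_total_pos_lt n : strict_total (@pos_lt n).
Proof. exact: strict_total_relpre val_inj strict_total_ltn. Qed.

Section Ranks.
Variable n : nat.
Local Open Scope nat_scope.
Implicit Types (B : rel 'I_n) (s t : 'S_n) (p q : 'I_n).

Definition rank B p := #|[set q | B q p]|.

Definition is_ranking s B := [forall p, s p == rank B p :> nat].

Section StrictTotalRank.
Variable B : rel 'I_n.
Hypothesis totB : strict_total B.

Lemma rank_lt_n p : rank B p < n.
Proof.
case: totB => irrB _ _; rewrite -[n]card_ord /rank.
by apply/proper_card/properP; split; [exact: subset_predT|exists p; rewrite ?inE ?irrB].
Qed.

Lemma ltn_rank q p : B q p -> rank B q < rank B p.
Proof.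
case: totB => irrB trB _ Bqp; apply/proper_card/properP; split.
  by apply/fintype.subsetP=> x; rewrite !inE => /trB; apply.
by exists q; rewrite !inE ?irrB.
Qed.

Lemma rank_inj : injective (rank B).
Proof.
case: totB => _ _ totB' p q eq_pq; apply: contraTeq isT => /totB' /orP[] /ltn_rank.
all: by rewrite eq_pq ltnn.
Qed.

Lemma exists_ranking : exists s, is_ranking s B.
Proof.
have inj_rk : injective (fun p => Ordinal (rank_lt_n p)).
  by move=> p q /(congr1 val) /rank_inj.
by exists (perm inj_rk); apply/forallP=> p; rewrite permE.
Qed.

Lemma is_ranking_ltn s : is_ranking s B -> forall q p, (s q < s p) = B q p.
Proof.
move=> /forallP rk q p; rewrite !(eqP (rk _)); apply/idP/idP; last exact: ltn_rank.
case: totB => _ _ totB'.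
case: (eqVneq q p) => [-> | /totB' /orP[//|/ltn_rank lt_pq] lt_qp].
  by rewrite ltnn.
by have := ltn_trans lt_pq lt_qp; rewrite ltnn.
Qed.

End StrictTotalRank.

Lemma rank_relpre t B p : rank (relpre t B) p = rank B (t p).
Proof.
rewrite /rank -[RHS](card_preimset _ (@perm_inj _ t)).
by apply: eq_card => q; rewrite !inE.
Qed.

Lemma is_ranking_relpre t s B : is_ranking (t * s)%g (relpre t B) = is_ranking s B.
Proof.
apply/forallP/forallP => rk p; last by rewrite rank_relpre permM; exact: rk.
by move: (rk (t^-1 p)%g); rewrite rank_relpre permM permKV.
Qed.

Lemma rank_pos_lt p : rank pos_lt p = p.
Proof.
have inj_widen : injective (widen_ord (ltnW (ltn_ord p))).
  by move=> i j /(congr1 val) /= /val_inj.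
rewrite /rank -[in RHS](card_ord p) -(card_imset _ inj_widen).
apply: eq_card => q; rewrite !inE; apply/idP/imsetP => [lt_qp|[i _ ->]] /=.
  by exists (Ordinal lt_qp); last exact: val_inj.
exact: (ltn_ord i).
Qed.

Lemma is_ranking_pos_lt s : is_ranking s pos_lt -> s = 1%g.
Proof.
move=> /forallP rk; apply/permP => p; apply/val_inj.
by rewrite /= (eqP (rk p)) perm1 rank_pos_lt.
Qed.

End Ranks.

(** * Rounds of a shuffle over a finite alphabet *)

Fixpoint conv_pow (R : pzSemiRingType) n (P : 'S_n -> R) k (s : 'S_n) : R :=
  if k is k'.+1 then \sum_t P t * conv_pow P k' (t^-1 * s)%g else (s == 1%g)%:R.

Section ConvPow.
Variables (R : numDomainType) (n : nat).
Implicit Types (P Q : 'S_n -> R).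

Lemma conv_pow_ge0 P k s : (forall t, 0 <= P t) -> 0 <= conv_pow P k s.
Proof.
move=> P_ge0; elim: k s => [|k IHk] s /=; first exact: ler0n.
by apply: sumr_ge0 => t _; rewrite mulr_ge0.
Qed.

Lemma ler_conv_pow P Q k s : (forall t, 0 <= Q t) -> (forall t, Q t <= P t) ->
  conv_pow Q k s <= conv_pow P k s.
Proof.
move=> Q_ge0 leQP; elim: k s => [|k IHk] s //=.
by apply: ler_sum => t _; rewrite ler_pM ?conv_pow_ge0.
Qed.

End ConvPow.

Lemma sum_pairs_le (R : numDomainType) n (F : 'I_n -> 'I_n -> R) (c : R) :
    (forall q p : 'I_n, (q < p)%N -> F q p <= c) ->
  \sum_(p : 'I_n) \sum_(q : 'I_n | (q < p)%N) F q p <= 'C(n, 2)%:R * c.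
Proof.
move=> leFc; apply: le_trans (ler_sum _ (fun p _ => ler_sum _ (fun q => leFc q p))) _.
rewrite (eq_bigr (fun p : 'I_n => c *+ p)) => [|p _]; last first.
  by rewrite -[in RHS](rank_pos_lt p) /rank -sumr_const; apply: eq_bigl => q; rewrite inE.
by rewrite sumrMnr mulr_natl -bin2_sum big_mkord.
Qed.

Section Rounds.
Variables (R : realFieldType) (n : nat) (T : finType) (iota : T -> int) (f : T -> R).
Hypothesis f_ge0 : forall x, 0 <= f x.
Implicit Types (B E : rel 'I_n) (s t : 'S_n) (p q : 'I_n).

Definition round := ({ffun 'I_n -> T} * 'S_n)%type.

Definition round_weight (r : round) : R := (\prod_p f (r.1 p)) / (n`!)%:R.

Definition block_order B t (v : int) : rel 'I_n :=
  if 0 < v then B else if v < 0 then (fun q p => B p q) else relpre t pos_lt.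

Definition refine (r : round) B : rel 'I_n := fun q p =>
  (iota (r.1 q) < iota (r.1 p)) ||
  (iota (r.1 q) == iota (r.1 p)) && block_order B r.2 (iota (r.1 p)) q p.

Definition same_block (w : {ffun 'I_n -> T}) : rel 'I_n := fun q p =>
  (iota (w q) == iota (w p)) && (iota (w p) != 0).

(* [run_sum k F B E] sums [F] over the outcomes of [k] rounds started from the
   order [B]; [E] collects the pairs that so far always shared a nonzero block. *)
Fixpoint run_sum k (F : rel 'I_n -> rel 'I_n -> R) B E : R :=
  if k is k'.+1 then
    \sum_(r : round) round_weight r *
      run_sum k' F (refine r B) (fun q p => E q p && same_block r.1 q p)
  else F B E.

Lemma round_weight_ge0 r : 0 <= round_weight r.
Proof. by rewrite divr_ge0 ?ler0n // prodr_ge0. Qed.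

Lemma strict_total_refine r B : strict_total B -> strict_total (refine r B).
Proof.
move=> totB; apply: (strict_total_lex (fun p => iota (r.1 p))) => v; rewrite /block_order.
case: ifP => _; first exact: totB.
case: ifP => _; first exact: strict_total_rev.
exact: strict_total_relpre perm_inj (strict_total_pos_lt n).
Qed.

Lemma ler_run_sum k F G B E :
    (forall B E, strict_total B -> F B E <= G B E) -> strict_total B ->
  run_sum k F B E <= run_sum k G B E.
Proof.
move=> leFG; elim: k B E => [|k IHk] B E totB /=; first exact: leFG.
apply: ler_sum => r _; rewrite ler_wpM2l ?round_weight_ge0 //.
exact/IHk/strict_total_refine.
Qed.

Lemma run_sum_sum (I : finType) k (F : I -> rel 'I_n -> rel 'I_n -> R) B E :
  run_sum k (fun B E => \sum_i F i B E) B E = \sum_i run_sum k (F i) B E.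
Proof.
elim: k B E => [|k IHk] B E //=; rewrite exchange_big /=.
by apply: eq_bigr => r _; rewrite IHk mulr_sumr.
Qed.

Definition relabel_round t (r : round) : round := ([ffun p => r.1 (t p)], (t * r.2)%g).

Lemma relabel_roundK t : cancel (relabel_round t) (relabel_round t^-1).
Proof.
case=> w tau; congr (_, _); last by rewrite mulgA mulVg mul1g.
by apply/ffunP => p; rewrite !ffunE permKV.
Qed.

Lemma round_weight_relabel t r : round_weight (relabel_round t r) = round_weight r.
Proof.
congr (_ / _); rewrite [RHS](reindex_inj (@perm_inj _ t)).
by apply: eq_bigr => p _; rewrite ffunE.
Qed.

Lemma refine_relabel t r B :
  refine (relabel_round t r) (relpre t B) = relpre t (refine r B).
Proof.
apply: funext => q; apply: funext => p.
rewrite /refine /block_order /= !ffunE.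
by case: ifP => _ //; case: ifP => _ //=; rewrite !permM.
Qed.

Lemma same_block_relabel t r : same_block (relabel_round t r).1 = relpre t (same_block r.1).
Proof. by apply: funext => q; apply: funext => p; rewrite /same_block /= !ffunE. Qed.

Lemma run_sum_relpre k t F B E :
  run_sum k F (relpre t B) (relpre t E) =
  run_sum k (fun B E => F (relpre t B) (relpre t E)) B E.
Proof.
elim: k B E => [|k IHk] B E //=.
rewrite (reindex_inj (can_inj (relabel_roundK t))); apply: eq_bigr => r _.
by rewrite round_weight_relabel refine_relabel same_block_relabel -IHk.
Qed.

Definition agree_off E B B' := forall q p, ~~ E q p -> B q p = B' q p.

Lemma same_block_sym w : symmetric (same_block w).
Proof. by move=> q p; rewrite /same_block eq_sym; case: eqP => // ->. Qed.

Lemma agree_off_refine r E B B' : symmetric E -> agree_off E B B' ->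
  agree_off (fun q p => E q p && same_block r.1 q p) (refine r B) (refine r B').
Proof.
move=> symE agreeB q p; rewrite /same_block /refine /block_order.
case: eqP => //= -> nE; congr (_ || _).
case: ltgtP nE => // _; rewrite andbT => nE; apply: agreeB => //.
by rewrite symE.
Qed.

Lemma run_sum_agree_off k F B B' E :
    (forall B B' E, agree_off E B B' -> F B E = F B' E) ->
    symmetric E -> agree_off E B B' ->
  run_sum k F B E = run_sum k F B' E.
Proof.
move=> F_agree; elim: k B B' E => [|k IHk] B B' E symE agreeB /=; first exact: F_agree.
apply: eq_bigr => r _; congr (_ * _); apply: IHk; last exact: agree_off_refine.
by move=> q p; rewrite symE same_block_sym.
Qed.

Definition all_separated E := [forall q, forall p, ~~ E q p].

Definition distinct_pairs : rel 'I_n := fun q p => q != p.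

Definition ranked s : rel 'I_n -> rel 'I_n -> R := fun B _ => (is_ranking s B)%:R.

Definition separated : rel 'I_n -> rel 'I_n -> R := fun _ E => (all_separated E)%:R.

Definition separated_ranked s : rel 'I_n -> rel 'I_n -> R :=
  fun B E => (all_separated E && is_ranking s B)%:R.

Lemma run_sum_separated_le k B E : strict_total B ->
  run_sum k separated B E <= \sum_s run_sum k (separated_ranked s) B E.
Proof.
move=> totB; rewrite -run_sum_sum; apply: ler_run_sum => // {}B {}E {}totB.
have [s0 rk_s0] := exists_ranking totB.
rewrite (bigD1 s0) //= /separated_ranked rk_s0 andbT lerDl.
by apply: sumr_ge0 => s _; rewrite ler0n.
Qed.

Lemma run_sum_separated_ranked_perm k s :
  run_sum k (separated_ranked s) pos_lt distinct_pairs =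
  run_sum k (separated_ranked 1) pos_lt distinct_pairs.
Proof.
have relpre_distinct : relpre s distinct_pairs = distinct_pairs :> rel _.
  by apply: funext => q; apply: funext => p; rewrite /= /distinct_pairs (inj_eq perm_inj).
rewrite (@run_sum_agree_off _ _ pos_lt (relpre s pos_lt)); first last.
- by move=> q p /negPn /eqP ->; rewrite /pos_lt /= !ltnn.
- by move=> q p; rewrite /distinct_pairs eq_sym.
- move=> B B' E agreeB; rewrite /separated_ranked.
  case: (boolP (all_separated E)) => //= /'forall_forallP sepE.
  congr (is_ranking _ _)%:R; apply: funext => q; apply: funext => p.
  exact/agreeB/sepE.
rewrite -{1}relpre_distinct run_sum_relpre; congr run_sum.
apply: funext => B; apply: funext => E; rewrite /separated_ranked -[X in is_ranking X _]mulg1.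
rewrite is_ranking_relpre; congr (_ && _)%:R.
apply/'forall_forallP/'forall_forallP => sepE q p; last exact: sepE.
by have := sepE (s^-1 q)%g (s^-1 p)%g; rewrite /= !permKV.
Qed.

Lemma run_sum_separated_le_ranked k s :
  run_sum k separated pos_lt distinct_pairs <=
  (n`!)%:R * run_sum k (ranked s) pos_lt distinct_pairs.
Proof.
apply: le_trans (run_sum_separated_le _ _ (strict_total_pos_lt n)) _.
under eq_bigr do rewrite run_sum_separated_ranked_perm.
rewrite sumr_const card_Sn mulr_natl; apply: ler_wMn2r.
rewrite -(run_sum_separated_ranked_perm k s).
by apply: ler_run_sum (strict_total_pos_lt n) => B E _; rewrite ler_nat; case: all_separated.
Qed.

Lemma run_sum_ranked_relpre k s t B E :
  run_sum k (ranked s) (relpre t B) E = run_sum k (ranked (t^-1 * s)%g) B (relpre t^-1%g E).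
Proof.
have relpreK : relpre t (relpre t^-1%g E) = E :> rel _.
  by apply: funext => q; apply: funext => p; rewrite /= !permK.
rewrite -{1}relpreK run_sum_relpre; congr run_sum.
apply: funext => B'; apply: funext => E'.
by rewrite /ranked -[X in is_ranking X _](mulKVg t s) is_ranking_relpre.
Qed.

Definition shuffle_prob s : R :=
  \sum_(r : round) round_weight r * (is_ranking s (refine r pos_lt))%:R.

Lemma shuffle_prob_ge0 s : 0 <= shuffle_prob s.
Proof. by apply: sumr_ge0 => r _; rewrite mulr_ge0 ?round_weight_ge0 ?ler0n. Qed.

Lemma run_sum_ranked_le k s E :
  run_sum k (ranked s) pos_lt E <= conv_pow shuffle_prob k s.
Proof.
elim: k s E => [|k IHk] s E /=.
  rewrite /ranked; case: (boolP (is_ranking s pos_lt)) => [/is_ranking_pos_lt ->|_].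
    by rewrite eqxx.
  exact: ler0n.
rewrite /shuffle_prob; under [X in _ <= X]eq_bigr do rewrite mulr_suml.
rewrite exchange_big /=; apply: ler_sum => r _.
under [X in _ <= X]eq_bigr do rewrite -mulrA.
rewrite -mulr_sumr; apply: ler_wpM2l; first exact: round_weight_ge0.
have tot_r := strict_total_refine r (strict_total_pos_lt n).
have [t rk_t] := exists_ranking tot_r.
have refine_t : refine r pos_lt = relpre t pos_lt.
  by apply: funext => q; apply: funext => p; rewrite -(is_ranking_ltn tot_r rk_t).
rewrite [X in _ <= X](bigD1 t) //= rk_t mul1r {1}refine_t run_sum_ranked_relpre.
rewrite -[X in X <= _]addr0 lerD ?IHk //.
by apply: sumr_ge0 => t' _; rewrite mulr_ge0 ?ler0n ?conv_pow_ge0 //; exact: shuffle_prob_ge0.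
Qed.

Definition total_weight : R := \sum_(r : round) round_weight r.

Definition pair_prob q p : R := \sum_(r : round) round_weight r * (same_block r.1 q p)%:R.

Lemma pair_sum_ge1 E x y : symmetric E -> irreflexive E -> E x y ->
  1 <= \sum_(p : 'I_n) \sum_(q : 'I_n | (q < p)%N) (E q p)%:R :> R.
Proof.
move=> symE irrE Exy.
have [q [p lt_qp Eqp]] : exists q : 'I_n, exists2 p : 'I_n, (q < p)%N & E q p.
  case: (ltngtP x y) => [lt_xy|lt_yx|/val_inj eq_xy]; first by exists x, y.
    by exists y, x; rewrite // symE.
  by move: Exy; rewrite eq_xy irrE.
rewrite (bigD1 p) //= (bigD1 q) //= Eqp -addrA lerDl.
by rewrite addr_ge0 // !sumr_ge0 // => *; rewrite ?sumr_ge0 ?ler0n.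
Qed.

Lemma run_sum_separated_ge k B E : symmetric E -> irreflexive E ->
  total_weight ^+ k -
    \sum_(p : 'I_n) \sum_(q : 'I_n | (q < p)%N) (E q p)%:R * pair_prob q p ^+ k <=
  run_sum k separated B E.
Proof.
elim: k B E => [|k IHk] B E symE irrE /=.
  rewrite /separated; case: (boolP (all_separated E)) => [_|].
    rewrite lerBlDr lerDl; apply: sumr_ge0 => p _; apply: sumr_ge0 => q _.
    by rewrite mulr_ge0 ?ler0n.
  case/forallPn => q /forallPn [p /negPn Eqp]; rewrite subr_le0.
  under eq_bigr do under eq_bigr do rewrite expr0 mulr1.
  exact: pair_sum_ge1 Eqp.
have symE' (r : round) : symmetric (fun q p => E q p && same_block r.1 q p).
  by move=> q p; rewrite symE same_block_sym.
have irrE' (r : round) : irreflexive (fun q p => E q p && same_block r.1 q p).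
  by move=> p; rewrite irrE.
apply: le_trans (ler_sum _ (fun r _ =>
  ler_wpM2l (round_weight_ge0 r) (IHk (refine r B) _ (symE' r) (irrE' r)))).
under [X in _ <= X]eq_bigr do rewrite mulrBr.
rewrite sumrB -mulr_suml exprS lerB //.
under [X in X <= _]eq_bigr do rewrite mulr_sumr.
rewrite exchange_big /=; apply: ler_sum => p _.
under [X in X <= _]eq_bigr do rewrite mulr_sumr.
rewrite exchange_big /=; apply: ler_sum => q _.
rewrite exprSr mulrA [in X in _ <= _ * X]/pair_prob mulr_sumr; apply: ler_sum => r _.
rewrite -mulnb natrM [X in X <= _]mulrCA [X in X <= _]mulrACA [X in _ <= X]mulrACA.
by rewrite [_ ^+ k * _]mulrC.
Qed.


Definition letter_mass : R := \sum_x f x.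

Definition nonzero_collision : R := \sum_(x | iota x != 0) f x ^+ 2.

Lemma sum_round (F : round -> R) :
  \sum_(r : round) F r = \sum_(w : {ffun 'I_n -> T}) \sum_t F (w, t).
Proof. by rewrite pair_bigA; apply: eq_bigr => -[w t] _. Qed.

Lemma sum_round_weight (F : {ffun 'I_n -> T} -> R) :
  \sum_(r : round) round_weight r * F r.1 =
  \sum_(w : {ffun 'I_n -> T}) (\prod_p f (w p)) * F w.
Proof.
rewrite sum_round; apply: eq_bigr => w _ /=.
rewrite -big_distrl; congr (_ * _).
rewrite (eq_bigr (fun=> (\prod_p f (w p)) / (n`!)%:R)) // sumr_const card_Sn.
by rewrite -(mulr_natr (_ / _)) divfK // pnatr_eq0 -lt0n fact_gt0.
Qed.

Lemma sum_word_weight : \sum_(w : {ffun 'I_n -> T}) \prod_p f (w p) = letter_mass ^+ n.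
Proof. by rewrite -(bigA_distr_bigA (fun _ => f)) prodr_const card_ord. Qed.

Lemma total_weightE : total_weight = letter_mass ^+ n.
Proof.
rewrite -sum_word_weight -[LHS](eq_bigr _ (fun r _ => mulr1 (round_weight r))).
by rewrite (sum_round_weight (fun=> 1)); under eq_bigr do rewrite mulr1.
Qed.

Lemma letter_mass_ge0 : 0 <= letter_mass.
Proof. exact: sumr_ge0. Qed.

Hypothesis letter_mass_le1 : letter_mass <= 1.

Lemma sum_word_weight_pinned x q p : q != p ->
  \sum_(w : {ffun 'I_n -> T}) (\prod_j f (w j)) * ((w q == x) && (w p == x))%:R <= f x ^+ 2.
Proof.
move=> neq_qp.
pose G j y := f y * (if j == q then (y == x)%:R else 1) * (if j == p then (y == x)%:R else 1).
have sum_pin : \sum_y f y * (y == x)%:R = f x.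
  by rewrite (bigD1 x) //= eqxx mulr1 big1 ?addr0 // => y /negbTE ->; rewrite mulr0.
have prodG w : \prod_j G j (w j) = (\prod_j f (w j)) * ((w q == x) && (w p == x))%:R.
  by rewrite !big_split /= -!big_mkcond /= !big_pred1_eq -mulrA -natrM mulnb.
under eq_bigr do rewrite -prodG.
rewrite -(bigA_distr_bigA G) (bigD1 q) //= (bigD1 p) 1?eq_sym //=.
rewrite /G eqxx (negbTE neq_qp) eq_sym (negbTE neq_qp) eqxx.
under eq_bigr do rewrite mulr1.
under [in X in _ * (X * _)]eq_bigr do rewrite mulr1.
rewrite sum_pin mulrA -expr2 ler_piMr ?exprn_ge0 //.
apply: prodr_ile1 => j /andP[/negbTE -> /negbTE ->].
under eq_bigr do rewrite !mulr1.
by rewrite letter_mass_ge0 letter_mass_le1.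
Qed.

Hypothesis iota_inj : injective iota.

Lemma pair_prob_le q p : q != p -> pair_prob q p <= nonzero_collision.
Proof.
move=> neq_qp.
have same_block_le w : (same_block w q p)%:R <=
    \sum_(x | iota x != 0) ((w q == x) && (w p == x))%:R :> R.
  rewrite /same_block (inj_eq iota_inj).
  case: andP => [[/eqP eq_qp nz_p]|_]; last by rewrite sumr_ge0 // => x _; rewrite ler0n.
  by rewrite (bigD1 (w p)) //= eq_qp eqxx lerDl sumr_ge0 // => x _; rewrite ler0n.
rewrite /pair_prob (sum_round_weight (fun w => (same_block w q p)%:R)).
apply: (@le_trans _ _ (\sum_(w : {ffun 'I_n -> T}) \prod_j f (w j) *
    \sum_(x | iota x != 0) ((w q == x) && (w p == x))%:R)).
  by apply: ler_sum => w _; apply: ler_wpM2l; [exact: prodr_ge0 | exact: same_block_le].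
under eq_bigr do rewrite mulr_sumr.
by rewrite exchange_big; apply: ler_sum => x _; exact: sum_word_weight_pinned.
Qed.

Lemma pair_prob_ge0 q p : 0 <= pair_prob q p.
Proof. by apply: sumr_ge0 => r _; rewrite mulr_ge0 ?round_weight_ge0 ?ler0n. Qed.

Lemma separation_bound k s :
  letter_mass ^+ (n * k) - 'C(n, 2)%:R * nonzero_collision ^+ k <=
  (n`!)%:R * conv_pow shuffle_prob k s.
Proof.
have sym_dp : symmetric distinct_pairs by move=> q p; rewrite /distinct_pairs eq_sym.
have irr_dp : irreflexive distinct_pairs by move=> p; rewrite /distinct_pairs eqxx.
have pairs_le : \sum_(p : 'I_n) \sum_(q : 'I_n | (q < p)%N)
    (distinct_pairs q p)%:R * pair_prob q p ^+ k <= 'C(n, 2)%:R * nonzero_collision ^+ k.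
  apply: sum_pairs_le => q p lt_qp; have neq_qp : q != p by rewrite neq_ltn lt_qp.
  have coll_ge0 : 0 <= nonzero_collision by apply: sumr_ge0 => x _; exact: sqr_ge0.
  by rewrite /distinct_pairs neq_qp mul1r lerXn2r ?nnegrE ?pair_prob_ge0 ?pair_prob_le.
apply: le_trans (le_trans _ (run_sum_separated_ge k pos_lt sym_dp irr_dp)) _.
  by rewrite total_weightE -exprM lerB.
apply: le_trans (run_sum_separated_le_ranked k s) _.
by apply: ler_wpM2l; [exact: ler0n | exact: run_sum_ranked_le].
Qed.

End Rounds.

Lemma rank_refine n (T : finType) (iota : T -> int) (r : round n T) p :
  rank (refine iota r pos_lt) p = shuffle_value [ffun q => iota (r.1 q)] r.2 p.
Proof.
rewrite /rank; set v := iota (r.1 p).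
set below := [set q | iota (r.1 q) < v].
set level := [set q | (iota (r.1 q) == v) && block_order pos_lt r.2 v q p].
have -> : [set q | refine iota r pos_lt q p] = below :|: level.
  by apply/setP => q; rewrite !inE.
rewrite cardsU (@eq_card0 _ (below :&: level)) ?subn0; last first.
  by move=> q; rewrite !inE; case: ltgtP.
rewrite /shuffle_value ffunE; congr (_ + _)%N.
  by apply: eq_card => q; rewrite !inE ffunE.
rewrite /level /block_order; case: ltgtP => [v_lt0|v_gt0|v_eq0].
all: by apply: eq_card => q; rewrite !inE ffunE ?v_eq0.
Qed.

Lemma shuffle_probE (R : realType) n (T : finType) (iota : T -> int) (f : T -> R) s :
  shuffle_prob iota f s = \sum_(w : {ffun 'I_n -> T})
    (\prod_j f (w j)) * shuffle_cond R [ffun q => iota (w q)] s.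
Proof.
rewrite /shuffle_prob sum_round; apply: eq_bigr => w _.
rewrite /shuffle_cond -sum1_card natr_sum mulr_suml mulr_sumr [RHS]big_mkcond /=.
apply: eq_bigr => t _; rewrite inE.
have -> : is_ranking s (refine iota (w, t) pos_lt) =
    [forall p, s p == shuffle_value [ffun q => iota (w q)] t p :> nat].
  by apply: eq_forallb => p; rewrite rank_refine.
by case: ifP; rewrite ?mulr1 ?mulr0 // mul1r.
Qed.

Lemma fsbig_setT_fin (R : Type) (idx : R) (op : Monoid.com_law idx) (T : finType)
    (F : T -> R) :
  \big[op/idx]_(x \in [set: T]) F x = \big[op/idx]_(x : T) F x.
Proof.
rewrite (fsbigE (index_enum T)) ?index_enum_uniq //.
- by apply: eq_bigl => x; rewrite in_setT.
- by move=> x _ /negP; rewrite mem_index_enum.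
Qed.

Lemma shufflekE (R : realType) n g (a b : nat -> R) k (s : 'S_n) :
  shufflek g a b k s = conv_pow (shuffle1 g a b) k s.
Proof. by elim: k s => //= k IHk s; apply: eq_bigr => t _; rewrite IHk. Qed.

(** * Truncating the alphabet *)

Section Truncation.
Variables (R : realType) (n : nat) (g : R) (a b : nat -> R).
Hypotheses (g_ge0 : 0 <= g) (a_ge0 : forall i, 0 <= a i) (b_ge0 : forall i, 0 <= b i).

Definition trunc_letter N := ('I_1 + ('I_N + 'I_N))%type.

Definition trunc_val N (x : trunc_letter N) : int :=
  match x with
  | inl _ => 0
  | inr (inl i) => Posz i.+1
  | inr (inr i) => Negz i
  end.

Lemma trunc_val_inj N : injective (@trunc_val N).
Proof.
case=> [i|[i|i]] [j|[j|j]] //=.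
- by rewrite (ord1 i) (ord1 j).
- by move=> [] /val_inj ->.
- by move=> [] /val_inj ->.
Qed.

Definition trunc_of_int N (z : int) : trunc_letter N :=
  match z with
  | Posz i.+1 => if insub i is Some j then inr (inl j) else inl ord0
  | Negz i => if insub i is Some j then inr (inr j) else inl ord0
  | _ => inl ord0
  end.

Lemma trunc_of_intK N z : (absz z <= N)%N -> trunc_val (trunc_of_int N z) = z.
Proof.
by case: z => [[|i]|i] //= z_le; case: insubP => [j _ j_i|/negP] //=; rewrite j_i.
Qed.

Definition trunc_prob N (x : trunc_letter N) : R := letterp g a b (trunc_val x).

Lemma letterp_ge0 z : 0 <= letterp g a b z.
Proof. by case: z => [[|i]|i] /=. Qed.

Lemma letter_mass_trunc N : letter_mass (@trunc_prob N) = g + series a N + series b N.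
Proof.
rewrite /letter_mass big_sumType big_ord1 big_sumType /series /= -!(big_mkord xpredT).
by rewrite addrA.
Qed.

Lemma nonzero_collision_trunc N :
  nonzero_collision (@trunc_val N) (@trunc_prob N) =
  series (fun i => a i ^+ 2) N + series (fun i => b i ^+ 2) N.
Proof.
rewrite /nonzero_collision big_sumType big_sumType /= big_pred0 // add0r.
by rewrite /series /trunc_prob /= !big_mkord.
Qed.

Definition shuffle_term s (w : {ffun 'I_n -> int}) : \bar R :=
  (word_weight g a b w * shuffle_cond R w s)%:E.

Lemma shuffle_cond_le1 (w : {ffun 'I_n -> int}) s : shuffle_cond R w s <= 1.
Proof.
by rewrite ler_pdivrMr ?ltr0n ?fact_gt0 // mul1r ler_nat -card_Sn max_card.
Qed.

Lemma shuffle_term_ge0 s w : (0 <= shuffle_term s w)%E.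
Proof.
rewrite lee_fin mulr_ge0 ?divr_ge0 ?ler0n //.
by apply: prodr_ge0 => j _; exact: letterp_ge0.
Qed.

Definition trunc_word N (w : {ffun 'I_n -> trunc_letter N}) : {ffun 'I_n -> int} :=
  [ffun p => trunc_val (w p)].

Lemma trunc_word_inj N : injective (@trunc_word N).
Proof.
move=> w w' /ffunP eq_w; apply/ffunP => p.
by apply: (@trunc_val_inj N); have := eq_w p; rewrite !ffunE.
Qed.

Local Notation trunc_shuffle N := (shuffle_prob (@trunc_val N) (@trunc_prob N)).

Lemma sum_shuffle_term_trunc N s :
  (\sum_(w \in @trunc_word N @` setT) shuffle_term s w)%E = (trunc_shuffle N s)%:E.
Proof.
rewrite fsbig_image; last by move=> w w' _ _; exact: trunc_word_inj.
rewrite fsbig_setT_fin sumEFin shuffle_probE; congr (_%:E); apply: eq_bigr => w _.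
by congr (_ * _); apply: eq_bigr => p _; rewrite ffunE.
Qed.

Hypothesis mass_le1 : forall N, g + series a N + series b N <= 1.

Lemma trunc_shuffle_le1 N (s : 'S_n) : trunc_shuffle N s <= 1.
Proof.
rewrite shuffle_probE.
apply: (@le_trans _ _ (letter_mass (@trunc_prob N) ^+ n)).
  rewrite -sum_word_weight; apply: ler_sum => w _.
  rewrite ler_piMr ?shuffle_cond_le1 //.
  by apply: prodr_ge0 => j _; exact: letterp_ge0.
rewrite exprn_ile1 ?letter_mass_trunc ?mass_le1 //.
by rewrite -letter_mass_trunc; apply: sumr_ge0 => x _; exact: letterp_ge0.
Qed.

(* Finiteness of the sum is what keeps [fine] in [shuffle1] from returning 0. *)
Lemma esum_shuffle_term_le1 s :
  (\esum_(w in [set: {ffun 'I_n -> int}]) shuffle_term s w <= 1%:E)%E.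
Proof.
apply: ge_ereal_sup => _ [X [finX _] <-].
case/finite_fsetP: finX => B ->.
pose N := (\max_(w <- finmap.enum_fset B) \max_(p : 'I_n) absz (w p))%N.
apply: (@le_trans _ _ (\sum_(w \in @trunc_word N @` setT) shuffle_term s w)%E).
  apply: lee_fsum_nneg_subset => [||w|w _]; first exact: finite_fset.
  - exact/finite_image/finite_finset.
  - rewrite !inE /= => Bw; exists [ffun p => trunc_of_int N (w p)] => //.
    apply/ffunP => p; rewrite !ffunE trunc_of_intK //.
    apply: leq_trans (leq_bigmax_seq _ Bw isT).
    exact: (@leq_bigmax _ (fun p => absz (w p)) p).
  - exact: shuffle_term_ge0.
by rewrite sum_shuffle_term_trunc lee_fin trunc_shuffle_le1.
Qed.

Lemma trunc_shuffle_le N (s : 'S_n) : trunc_shuffle N s <= shuffle1 g a b s.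
Proof.
have : ((trunc_shuffle N s)%:E <=
    \esum_(w in [set: {ffun 'I_n -> int}]) shuffle_term s w)%E.
  rewrite -sum_shuffle_term_trunc; apply: esum_ge.
  exists (@trunc_word N @` setT)%classic => //.
  by split => //; exact/finite_image/finite_finset.
move: (esum_shuffle_term_le1 s); rewrite /shuffle1.
by case: (\esum_(_ in _) _)%E.
Qed.

Lemma shufflek_trunc_bound N k (s : 'S_n) :
  (g + series a N + series b N) ^+ (n * k) -
    'C(n, 2)%:R * (series (fun i => a i ^+ 2) N + series (fun i => b i ^+ 2) N) ^+ k <=
  (n`!)%:R * shufflek g a b k s.
Proof.
have trunc_ge0 (x : trunc_letter N) : 0 <= trunc_prob x by exact: letterp_ge0.
have mass_le1' : letter_mass (@trunc_prob N) <= 1 by rewrite letter_mass_trunc.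
have := separation_bound trunc_ge0 mass_le1' (@trunc_val_inj N) k s.
rewrite letter_mass_trunc nonzero_collision_trunc => /le_trans; apply.
rewrite shufflekE; apply: ler_wpM2l; first exact: ler0n.
by apply: ler_conv_pow => t; [exact: shuffle_prob_ge0 | exact: trunc_shuffle_le].
Qed.

End Truncation.

Section NonnegSeries.
Variables (R : realType) (u : nat -> R).
Hypotheses (u_ge0 : forall i, 0 <= u i) (cvg_u : cvgn (series u)).

Lemma series_le_limn N : series u N <= limn (series u).
Proof. by apply: nondecreasing_cvgn_le cvg_u N; exact: nondecreasing_series. Qed.

Lemma limn_series_ge0 : 0 <= limn (series u).
Proof. by apply: le_trans (series_le_limn 0); rewrite /series /= big_geq. Qed.

Lemma le_limn_series i : u i <= limn (series u).
Proof.
apply: le_trans (series_le_limn i.+1); rewrite /series /= big_nat_recr //= lerDr.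
exact: sumr_ge0.
Qed.

Lemma cvgn_series_sqr : limn (series u) <= 1 -> cvgn (series (fun i => u i ^+ 2)).
Proof.
move=> lim_le1; apply: series_le_cvg cvg_u => i; first exact: sqr_ge0.
  exact: u_ge0.
by rewrite expr2 ler_piMr // (le_trans (le_limn_series i)).
Qed.

End NonnegSeries.

Lemma series_sqr_le_limn (R : realType) (u : nat -> R) N :
    (forall i, 0 <= u i) -> cvgn (series u) -> limn (series u) <= 1 ->
  series (fun i => u i ^+ 2) N <= limn (series (fun i => u i ^+ 2)).
Proof.
move=> u_ge0 cvg_u lim_le1.
by apply: series_le_limn (cvgn_series_sqr u_ge0 cvg_u lim_le1) N => i; exact: sqr_ge0.
Qed.

Lemma sep_dist_le (R : realType) n (P : 'S_n -> R) c :
  (forall s, 1 - (n`!)%:R * P s <= c) -> sep_dist P <= c.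
Proof.
move=> le_c; have term_le s : 1 - P s / unif R s <= c by rewrite /unif invrK mulrC.
by rewrite /sep_dist; apply: (big_ind (fun x => x <= c)) => // x y; rewrite ge_max => -> ->.
Qed.

Section Limit.
Local Open Scope classical_set_scope.

Lemma cvgn_pow_1 (R : realType) (u : nat -> R) (j : nat) :
  u @ \oo --> (1 : R) -> (fun N => u N ^+ j) @ \oo --> (1 : R).
Proof.
move=> cvg_u; rewrite -(expr1n R j).
exact: continuous_cvg _ (@exprn_continuous R j 1) cvg_u.
Qed.

Lemma cvgn_le (R : realType) (u : nat -> R) l y :
  u @ \oo --> l -> (forall N, u N <= y) -> l <= y.
Proof.
move=> cvg_u le_uy; rewrite -(cvg_lim _ cvg_u) //.
by apply: limr_le; [exact: cvgP cvg_u | exact: nearW].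
Qed.

End Limit.

Unset Implicit Arguments.

Theorem theorem7p1 (R : realType) (n k : nat) (g : R) (a b : nat -> R)
  (hg : 0 <= g) (ha : forall i, 0 <= a i) (hb : forall i, 0 <= b i)
  (hca : cvgn (series a)) (hcb : cvgn (series b))
  (hsum : g + limn (series a) + limn (series b) = 1) :
  sep_dist (@shufflek R n g a b k) <=
    ('C(n, 2))%:R * (limn (series (fun i => a i ^+ 2)) + limn (series (fun i => b i ^+ 2))) ^+ k.
Proof.
set c := _ + _.
have lim_a_ge0 := limn_series_ge0 ha hca.
have lim_b_ge0 := limn_series_ge0 hb hcb.
have mass_le1 N : g + series a N + series b N <= 1.
  by have := series_le_limn ha hca N; have := series_le_limn hb hcb N; lra.
have coll_le N : series (fun i => a i ^+ 2) N + series (fun i => b i ^+ 2) N <= c.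
  by rewrite lerD // series_sqr_le_limn //; lra.
have coll_ge0 N : 0 <= series (fun i => a i ^+ 2) N + series (fun i => b i ^+ 2) N.
  by apply: addr_ge0; apply: sumr_ge0 => i _; exact: sqr_ge0.
have cvg_mass : ((fun N => g + series a N + series b N) @ \oo --> (1 : R))%classic.
  by rewrite -hsum; apply: cvgD; [apply: cvgD; [exact: cvg_cst | exact: hca] | exact: hcb].
apply: sep_dist_le => s; rewrite lerBlDr -lerBlDl.
apply: cvgn_le (cvgB (cvgn_pow_1 (n * k) cvg_mass) (cvg_cst _)) _ => N.
apply: le_trans (shufflek_trunc_bound hg ha hb mass_le1 N k s).
by rewrite lerB // ler_wpM2l // lerXn2r ?nnegrE ?coll_le ?coll_ge0 // (le_trans (coll_ge0 N)).
Qed.
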